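(* Let $n \in\mathbb N$ and $F\colon\mathbb R_+^n \to \mathbb R_+$. Then $F\in P_B^n$ if and only if $F\in P_{MB}^n$.
   Context: $\mathbb R_+=[0,\infty)$. A b-metric on $X$ is $d\colon X^2\to\mathbb R_+$ with $d(x,y)=0\iff x=y$, $d(x,y)=d(y,x)$, and for some $K\geqslant1$, $d(x,z)\leqslant K(d(x,y)+d(y,z))$ for all $x,y,z$; a metric is a b-metric with $K=1$. For spaces $(X_i,d_i)$ put $D(\mathbf x,\mathbf y)=F(d_1(x_1,y_1),\dots,d_n(x_n,y_n))$ on $\prod_{i=1}^nX_i$. $P^n_B$ is the set of $F$ such that for every collection of b-metric spaces $(X_i,d_i)$, $i=1,\dots,n$ (arbitrary constants), $D$ is a b-metric; $P^n_{MB}$ is the set of $F$ such that for every collection of metric spaces $(X_i,d_i)$, $D$ is a b-metric. *)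

From Stdlib Require Import Reals.
From mathcomp Require Import ssreflect ssrbool eqtype ssrnat fintype.
Open Scope R_scope.

Definition is_bmetric {X : Type} (d : X -> X -> R) : Prop :=
  (forall x y, 0 <= d x y) /\
  (forall x y, d x y = 0 <-> x = y) /\
  (forall x y, d x y = d y x) /\
  (exists K : R, 1 <= K /\ forall x y z, d x z <= K * (d x y + d y z)).

Definition is_metric {X : Type} (d : X -> X -> R) : Prop :=
  (forall x y, 0 <= d x y) /\
  (forall x y, d x y = 0 <-> x = y) /\
  (forall x y, d x y = d y x) /\
  (forall x y z, d x z <= d x y + d y z).

Definition prodD {n : nat} (F : ('I_n -> R) -> R) (X : 'I_n -> Type)
  (d : forall i, X i -> X i -> R) (x y : forall i, X i) : R :=
  F (fun i => d i (x i) (y i)).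

Definition P_B (n : nat) (F : ('I_n -> R) -> R) : Prop :=
  forall (X : 'I_n -> Type) (d : forall i, X i -> X i -> R),
    (forall i, is_bmetric (d i)) -> is_bmetric (prodD F X d).

Definition P_MB (n : nat) (F : ('I_n -> R) -> R) : Prop :=
  forall (X : 'I_n -> Type) (d : forall i, X i -> X i -> R),
    (forall i, is_metric (d i)) -> is_bmetric (prodD F X d).

(* One metric space, R^2 with the sup distance, already carries all the
   information. If D is a b-metric, with constant K, when every factor is this
   space, then for nonnegative arguments
   - F v = 0 only at v = 0;
   - F a <= 2K F b whenever a <= 2b (points 0, (a/2, b), (a, 0));
   - F (max b c) <= K (F b + F c) (points (b, 0), 0, (0, c)).
   Conversely these properties make D a b-metric for arbitrary b-metrics d_i:
   if L >= 1 is a common constant of the d_i and L <= 2^k, then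
   d_i(x,z) <= 2^(k+1) max(d_i(x,y), d_i(y,z)), and applying the doubling
   bound k+1 times gives D(x,z) <= (2K)^(k+1) K (D(x,y) + D(y,z)). *)
From Stdlib Require Import Reals Lra FunctionalExtensionality.
From mathcomp Require Import ssreflect ssrfun ssrbool eqtype ssrnat seq fintype.
Open Scope R_scope.

Definition relaxed_triangle {X : Type} (d : X -> X -> R) (K : R) : Prop :=
  forall x y z, d x z <= K * (d x y + d y z).

Lemma metric_is_bmetric {X : Type} (d : X -> X -> R) :
  is_metric d -> is_bmetric d.
Proof.
move=> [d_ge0 [d_eq0 [d_sym d_tri]]]; do 3!split=> //.
by exists 1; split=> [|x y z]; [lra | rewrite Rmult_1_l].
Qed.

Lemma P_MB_of_P_B (n : nat) (F : ('I_n -> R) -> R) : P_B n F -> P_MB n F.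
Proof. by move=> HB X d Hd; apply: HB => i; apply: metric_is_bmetric. Qed.

Lemma exists_pow2_ge (b : R) : exists k, b <= 2 ^ k.
Proof.
have [|k Hk] := Pow_x_infinity 2 _ b; first by rewrite Rabs_pos_eq; lra.
exists k; move: (Hk k (Nat.le_refl k)).
by rewrite Rabs_pos_eq; [lra | apply: pow_le; lra].
Qed.

Lemma fin_fun_bounded {T : finType} (f : T -> R) : exists L, forall x, f x <= L.
Proof.
suff [L HL] : exists L, forall x, x \in enum T -> f x <= L.
  by exists L => x; apply: HL; rewrite mem_enum.
elim: (enum T) => [|y s [L HL]]; first by exists 0.
exists (Rmax (f y) L) => x; rewrite in_cons => /orP [/eqP -> | /HL fx_le].
- exact: Rmax_l.
- exact: Rle_trans fx_le (Rmax_r _ _).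
Qed.

Lemma relaxed_triangle_le (X : Type) (d : X -> X -> R) (K K' : R) :
  (forall x y, 0 <= d x y) -> K <= K' -> relaxed_triangle d K ->
  relaxed_triangle d K'.
Proof.
move=> d_ge0 KK' dK x y z; apply: Rle_trans (dK x y z) _.
by apply: Rmult_le_compat_r => //; apply: Rplus_le_le_0_compat.
Qed.

Lemma bmetric_family_common_const {I : finType} {X : I -> Type}
    {d : forall i, X i -> X i -> R} :
  (forall i, is_bmetric (d i)) ->
  exists L, 1 <= L /\ forall i, relaxed_triangle (d i) L.
Proof.
move=> Hd.
have /fin_all_exists [K HK] :
    forall i, exists K, 1 <= K /\ relaxed_triangle (d i) K.
  by move=> i; have [_ [_ [_ HK]]] := Hd i.
have [L HL] := fin_fun_bounded K.
exists (Rmax 1 L); split=> [|i]; first exact: Rmax_l.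
have [_ Ki_tri] := HK i; have [d_ge0 _] := Hd i.
apply: relaxed_triangle_le Ki_tri => //.
exact: Rle_trans (HL i) (Rmax_r _ _).
Qed.

Lemma relaxed_triangle_le_max {X : Type} {d : X -> X -> R} {L : R}
    {x y z : X} :
  relaxed_triangle d L -> 0 <= L ->
  d x z <= 2 * L * Rmax (d x y) (d y z).
Proof.
move=> dL L_ge0; apply: Rle_trans (dL x y z) _.
have := Rmax_l (d x y) (d y z); have := Rmax_r (d x y) (d y z); nra.
Qed.

Section ProductBmetric.

Variables (n : nat) (F : ('I_n -> R) -> R) (C K : R).

Hypothesis F_ge0 : forall v, (forall i, 0 <= v i) -> 0 <= F v.
Hypothesis F_eq0 :
  forall v, (forall i, 0 <= v i) -> F v = 0 <-> forall i, v i = 0.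
Hypothesis C_ge1 : 1 <= C.
Hypothesis F_doubling :
  forall a b, (forall i, 0 <= a i <= 2 * b i) -> F a <= C * F b.
Hypothesis K_ge1 : 1 <= K.
Hypothesis F_max : forall b c, (forall i, 0 <= b i) -> (forall i, 0 <= c i) ->
  F (fun i => Rmax (b i) (c i)) <= K * (F b + F c).

Lemma F_doubling_iter k a b :
  (forall i, 0 <= a i <= 2 ^ k.+1 * b i) -> F a <= C ^ k.+1 * F b.
Proof.
elim: k a => [|k IHk] a Hab.
  by rewrite pow_1; apply: F_doubling => i; rewrite -(pow_1 2).
have {}IHk := IHk (fun i => 2 ^ k.+1 * b i).
have Fb_le := F_doubling a (fun i => 2 ^ k.+1 * b i).
change (C ^ k.+2) with (C * C ^ k.+1); rewrite Rmult_assoc.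
apply: Rle_trans (Fb_le _) _; first by move=> i; have := Hab i; simpl; lra.
apply: Rmult_le_compat_l; first lra.
apply: IHk => i; split; last exact: Rle_refl.
by have := Hab i; have := pow_le 2 k.+2; simpl; nra.
Qed.

Lemma P_B_of_doubling_max : P_B n F.
Proof.
move=> X d Hd; rewrite /is_bmetric /prodD.
have d_ge0 i : forall u v, 0 <= d i u v by have [] := Hd i.
split; [|split; [|split]].
- by move=> x y; apply: F_ge0.
- move=> x y; rewrite F_eq0 //; split=> [xy | <- i].
  + apply: functional_extensionality_dep => i.
    by have [_ [d_eq0 _]] := Hd i; apply/d_eq0.
  + by have [_ [d_eq0 _]] := Hd i; apply/d_eq0.
- move=> x y; f_equal; apply: functional_extensionality => i.
  by have [_ [_ [->]]] := Hd i.
- have [L [L_ge1 dL]] := bmetric_family_common_const Hd.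
  have [k Hk] := exists_pow2_ge L.
  exists (C ^ k.+1 * K); split.
    by have := pow_R1_Rle C k.+1 C_ge1; nra.
  move=> x y z; rewrite Rmult_assoc.
  apply: Rle_trans (F_doubling_iter k _
    (fun i => Rmax (d i (x i) (y i)) (d i (y i) (z i))) _) _.
  + move=> i; split=> //.
    apply: Rle_trans (relaxed_triangle_le_max (y := y i) (dL i) _) _; first lra.
    apply: Rmult_le_compat_r; last by simpl; lra.
    exact: Rle_trans (d_ge0 i _ _) (Rmax_l _ _).
  + apply: Rmult_le_compat_l; first by apply: pow_le; lra.
    exact: F_max.
Qed.

End ProductBmetric.

Definition sup_dist (p q : R * R) : R :=
  Rmax (Rabs (p.1 - q.1)) (Rabs (p.2 - q.2)).

Ltac sup_dist_arith :=
  unfold sup_dist, Rmax, Rabs in *; simpl in *;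
  repeat match goal with
         | |- context [Rcase_abs ?x] => destruct (Rcase_abs x)
         | |- context [Rle_dec ?x ?y] => destruct (Rle_dec x y)
         | H : context [Rcase_abs ?x] |- _ => destruct (Rcase_abs x)
         | H : context [Rle_dec ?x ?y] |- _ => destruct (Rle_dec x y)
         end; lra.

Lemma sup_dist_metric : is_metric sup_dist.
Proof.
split; [|split; [|split]].
- by move=> [a b] [c e]; sup_dist_arith.
- move=> [a b] [c e]; split=> [d0 | [<- <-]]; last by sup_dist_arith.
  by f_equal; sup_dist_arith.
- by move=> [a b] [c e]; sup_dist_arith.
- by move=> [a b] [c e] [g h]; sup_dist_arith.
Qed.

Section SupDistProduct.

Variables (n : nat) (F : ('I_n -> R) -> R) (K : R).

Hypothesis sep : forall x y : 'I_n -> R * R,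
  F (fun i => sup_dist (x i) (y i)) = 0 <-> x = y.
Hypothesis tri : forall x y z : 'I_n -> R * R,
  F (fun i => sup_dist (x i) (z i)) <=
  K * (F (fun i => sup_dist (x i) (y i)) + F (fun i => sup_dist (y i) (z i))).

Lemma F_eq0_of_sup_dist v :
  (forall i, 0 <= v i) -> F v = 0 <-> forall i, v i = 0.
Proof.
move=> v_ge0; have := sep (fun _ => (0, 0)) (fun i => (v i, 0)).
have -> : (fun i => sup_dist (0, 0) (v i, 0)) = v.
  by apply: functional_extensionality => i; have := v_ge0 i; sup_dist_arith.
move=> ->; split=> [v0 i | v0].
- by have := f_equal (fun w => (w i).1) v0 => /= ->.
- by apply: functional_extensionality => i; rewrite v0.
Qed.

Lemma F_doubling_of_sup_dist a b :
  (forall i, 0 <= a i <= 2 * b i) -> F a <= 2 * K * F b.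
Proof.
move=> ab.
have := tri (fun _ => (0, 0)) (fun i => (a i / 2, b i)) (fun i => (a i, 0)).
have -> : (fun i => sup_dist (0, 0) (a i, 0)) = a.
  by apply: functional_extensionality => i; have := ab i; sup_dist_arith.
have -> : (fun i => sup_dist (0, 0) (a i / 2, b i)) = b.
  by apply: functional_extensionality => i; have := ab i; sup_dist_arith.
have -> : (fun i => sup_dist (a i / 2, b i) (a i, 0)) = b.
  by apply: functional_extensionality => i; have := ab i; sup_dist_arith.
lra.
Qed.

Lemma F_max_of_sup_dist b c : (forall i, 0 <= b i) -> (forall i, 0 <= c i) ->
  F (fun i => Rmax (b i) (c i)) <= K * (F b + F c).
Proof.
move=> b_ge0 c_ge0.
have := tri (fun i => (b i, 0)) (fun _ => (0, 0)) (fun i => (0, c i)).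
have -> : (fun i => sup_dist (b i, 0) (0, c i)) = (fun i => Rmax (b i) (c i)).
  apply: functional_extensionality => i.
  by have := b_ge0 i; have := c_ge0 i; sup_dist_arith.
have -> : (fun i => sup_dist (b i, 0) (0, 0)) = b.
  by apply: functional_extensionality => i; have := b_ge0 i; sup_dist_arith.
have -> : (fun i => sup_dist (0, 0) (0, c i)) = c.
  by apply: functional_extensionality => i; have := c_ge0 i; sup_dist_arith.
done.
Qed.

End SupDistProduct.

Theorem theorem3p2 (n : nat) (F : ('I_n -> R) -> R)
  (HF : forall v : 'I_n -> R, (forall i, 0 <= v i) -> 0 <= F v) :
  P_B n F <-> P_MB n F.
Proof.
split; first exact: P_MB_of_P_B.
move=> HMB.
have [_ [sep [_ [K [K_ge1 tri]]]]] := HMB _ _ (fun _ => sup_dist_metric).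
apply: (P_B_of_doubling_max _ _ (2 * K) K HF).
- exact: F_eq0_of_sup_dist.
- lra.
- exact: F_doubling_of_sup_dist.
- exact: K_ge1.
- exact: F_max_of_sup_dist.
Qed.
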